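(* Let $m\in\mathbb{N}$, $m\geq 2$, and let $T:[0,1)\to[0,1)$ be $T(x)=mx \bmod 1$. Let $A\subset[0,1)$ be a nowhere dense set with $T(A)\subset A$. Then for every $t\in(0,1)$ that has a universal $m$-adic expansion, we simultaneously have $$A-t\subset\mathbb{Q}^c,\qquad A+t\subset\mathbb{Q}^c,\qquad \frac{A}{t}\subset\mathbb{Q}^c.$$ Moreover, if $t\in(1,\infty)$ and $1/t$ has a universal $m$-adic expansion, then $tA\subset\mathbb{Q}^c$. In particular, for Lebesgue almost every $t\in(0,1)$ the inclusions $A-t\subset\mathbb{Q}^c$, $A+t\subset\mathbb{Q}^c$, $A/t\subset\mathbb{Q}^c$ hold.
   Context: An $m$-adic expansion of $t\in(0,1)$ is a sequence $(t_k)\in\{0,1,\dots,m-1\}^{\mathbb{N}}$ with $t=\sum_{k\geq1}t_k m^{-k}$. Such an expansion is universal if for every $k\geq1$ and every word $x_1\cdots x_k\in\{0,\dots,m-1\}^k$ there is $k_0\in\mathbb{N}$ with $t_{k_0+1}\cdots t_{k_0+k}=x_1\cdots x_k$; $t$ has a universal $m$-adic expansion if some $m$-adic expansion of it is universal. Notation: $A\pm t=\{x\pm t:x\in A\}$, $tA=\{tx:x\in A\setminus\{0\}\}$, $\frac{A}{t}=t^{-1}A=\{t^{-1}x:x\in A\setminus\{0\}\}$. $\mathbb{Q}^c$ denotes the set of irrational real numbers. *)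

From HB Require Import structures.
From mathcomp Require Import all_boot all_order all_algebra.
From mathcomp Require Import all_classical all_reals all_analysis.
Set Implicit Arguments. Unset Strict Implicit. Unset Printing Implicit Defensive.
Import Order.TTheory GRing.Theory Num.Theory.
Import numFieldNormedType.Exports.
Local Open Scope classical_set_scope.
Local Open Scope ring_scope.

Definition mmod1 {R : realType} (m : nat) (x : R) : R :=
  m%:R * x - (Num.floor (m%:R * x))%:~R.

Definition nowhere_dense {R : realType} (A : set R) : Prop :=
  interior (closure A) = set0.

Definition madic_expansion {R : realType} (m : nat) (d : nat -> nat) (t : R) : Prop :=
  (forall k, (d k < m)%N) /\
  ((fun n => \sum_(0 <= k < n) (d k)%:R / (m%:R ^+ k.+1)) @ \oo --> t).

Definition universal_seq (m : nat) (d : nat -> nat) : Prop :=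
  forall w : seq nat, all (fun x => (x < m)%N) w ->
    exists k0 : nat, forall i, (i < size w)%N -> d (k0 + i)%N = nth 0%N w i.

Definition has_universal_expansion {R : realType} (m : nat) (t : R) : Prop :=
  exists d, madic_expansion m d t /\ universal_seq m d.

From HB Require Import structures.
From mathcomp Require Import all_boot all_order all_algebra.
From mathcomp Require Import all_classical all_reals all_analysis.
From mathcomp Require Import ring lra zify.
Import Order.TTheory GRing.Theory Num.Theory.
Import numFieldNormedType.Exports.
Local Open Scope classical_set_scope.
Local Open Scope ring_scope.
Set Implicit Arguments. Unset Strict Implicit. Unset Printing Implicit Defensive.

(* With fr the fractional part, T x = fr (m x) and T^n x = fr (m^n x).  Call
   tau n = m^n s - N n (N n an integer) the tails of s.  The key lemma: if the
   tails of s are dense in [0, 1], no x in A satisfies x = a + c s with a, c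
   rational, c <> 0.  Indeed, over a common denominator q, T^n x = fr (j/q + c tau n)
   for some j < q; as A is nowhere dense there is an interval I in [0, 1] with
   fr (j/q + c y) outside A for all j < q and y in I, and some tau n lies in I.
   Rationality of x - t, x + t, x / t (s = t) or t x = x / t^-1 (s = t^-1) is
   such a relation.  Density of the tails follows from visiting every m-adic
   interval, which holds
   - when s has a universal expansion: the tail right after an occurrence of the
     digits of v lies in [v/m^k, (v+1)/m^k];
   - for almost every s, taking tau n = fr (m^n s): the set of points of [0, 1)
     whose base-K digits avoid a value v has measure <= ((K-1)/K)^J for all J. *)

Section FractionalPart.
Variable R : realType.

Definition fr (y : R) : R := y - (Num.floor y)%:~R.

Lemma mmod1E (m : nat) (x : R) : mmod1 m x = fr (m%:R * x).
Proof. by []. Qed.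

Lemma fr_ge0 y : 0 <= fr y.
Proof. by rewrite /fr subr_ge0 floor_le. Qed.

Lemma fr_lt1 y : fr y < 1.
Proof. have := floorD1_gt y; rewrite intrD /fr; lra. Qed.

Lemma frDz y (z : int) : fr (y + z%:~R) = fr y.
Proof.
by rewrite /fr floorDrz ?intr_int // intrKfloor intrD opprD addrACA subrr addr0.
Qed.

Lemma fr_itv y (k : int) : k%:~R <= y < (k + 1)%:~R -> fr y = y - k%:~R.
Proof. by move=> h; rewrite /fr (floor_def h). Qed.

Lemma fr_id y : 0 <= y < 1 -> fr y = y.
Proof. by move=> h; rewrite (@fr_itv y 0) ?subr0 //= add0r. Qed.

Lemma frMn (n : nat) y : fr (n%:R * fr y) = fr (n%:R * y).
Proof.
have -> : n%:R * fr y = n%:R * y + (- (n%:Z * Num.floor y))%:~R.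
  by rewrite /fr intrN intrM mulrBr.
by rewrite frDz.
Qed.

Lemma floor_nat (x : R) : 0 <= x -> exists f : nat, f%:R <= x < f.+1%:R.
Proof.
move=> x0; have := floor_itv x; have := floor_ge0 x; rewrite x0.
case: (Num.floor x) => [f|f] // _ h; exists f.
by move: h; rewrite intrD /= -natr1.
Qed.

Lemma orbit_mmod1 (m : nat) (A : set R) x :
  A `<=` [set x | 0 <= x < 1] -> mmod1 m @` A `<=` A -> A x ->
  forall n, A (fr (m%:R ^+ n * x)).
Proof.
move=> sA TA Ax; elim=> [|n IH]; first by rewrite expr0 mul1r fr_id //; exact: sA.
by rewrite exprS -mulrA -frMn -mmod1E; apply: TA; exists (fr (m%:R ^+ n * x)).
Qed.

End FractionalPart.

Section Gaps.
Variable R : realType.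
Variable A : set R.
Hypothesis ndA : nowhere_dense A.

Lemma nowhere_dense_gap v v' : v < v' ->
  exists w w', [/\ v <= w, w < w', w' <= v' & forall u, w < u < w' -> ~ A u].
Proof.
move=> vv'; apply: contrapT => nogap.
suff : interior (closure A) ((v + v') / 2) by rewrite ndA.
apply/nbhs_ballP; exists ((v' - v) / 2) => /=; first lra.
move=> z; rewrite -ball_normE /= ltr_distlC => /andP [z1 z2] B.
move=> /nbhs_ballP [e /= e0 zeA].
set c := Num.max v (z - e); set c' := Num.min v' (z + e).
have [u [/andP [u1 u2] Au]] : exists u, c < u < c' /\ A u.
  apply: contrapT => H; apply: nogap; exists c, c'; split.
  - by rewrite le_max lexx.
  - by rewrite gt_max !lt_min; apply/andP; split; apply/andP; split; lra.
  - by rewrite ge_min lexx.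
  - by move=> u hu Au; apply: H; exists u.
move: u1 u2; rewrite gt_max lt_min => /andP [u1 u1'] /andP [u2 u2'].
exists u; split => //; apply: zeA; rewrite -ball_normE /= ltr_distlC.
by apply/andP; split; lra.
Qed.

Lemma nowhere_dense_gap_fr lo hi : lo < hi ->
  exists w w', [/\ lo <= w, w < w', w' <= hi & forall u, w < u < w' -> ~ A (fr u)].
Proof.
move=> lh; set K := Num.floor lo.
have /andP [K1 K2] := floor_itv lo; rewrite -/K intrD in K2.
set c := Num.min hi (K%:~R + 1).
have [c1 c2] : c <= hi /\ c <= K%:~R + 1 by rewrite /c !ge_min !lexx orbT.
have lo_c : lo < c by rewrite /c lt_min lh /=; lra.
have [w [w' [a1 a2 a3 noA]]] := @nowhere_dense_gap (lo - K%:~R) (c - K%:~R)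
  ltac:(lra).
exists (w + K%:~R), (w' + K%:~R); split; try lra.
move=> u /andP [u1 u2]; rewrite (@fr_itv _ u K); last by rewrite intrD; apply/andP; split; lra.
by apply: noA; apply/andP; split; lra.
Qed.

Lemma nowhere_dense_gap_affine (b k : R) : b != 0 -> forall a a', a < a' ->
  exists c c', [/\ a <= c, c < c', c' <= a' &
    forall y, c < y < c' -> ~ A (fr (k + b * y))].
Proof.
move=> b0 a a' aa'; move: b0; rewrite neq_lt => /orP [bn|bp].
- have [w [w' [h1 h2 h3 noA]]] := @nowhere_dense_gap_fr (k + b * a') (k + b * a)
    ltac:(nra).
  have hc : b * ((w' - k) / b) = w' - k by rewrite mulrC divfK // lt_eqF.
  have hc' : b * ((w - k) / b) = w - k by rewrite mulrC divfK // lt_eqF.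
  exists ((w' - k) / b), ((w - k) / b); split; try nra.
  by move=> y /andP [y1 y2]; apply: noA; apply/andP; split; nra.
- have [w [w' [h1 h2 h3 noA]]] := @nowhere_dense_gap_fr (k + b * a) (k + b * a')
    ltac:(nra).
  have hc : b * ((w - k) / b) = w - k by rewrite mulrC divfK // gt_eqF.
  have hc' : b * ((w' - k) / b) = w' - k by rewrite mulrC divfK // gt_eqF.
  exists ((w - k) / b), ((w' - k) / b); split; try nra.
  by move=> y /andP [y1 y2]; apply: noA; apply/andP; split; nra.
Qed.

Lemma nowhere_dense_gap_shifts (b : R) (q : nat) (L : seq nat) : b != 0 ->
  forall a a', a < a' -> exists c c', [/\ a <= c, c < c', c' <= a' &
    forall y, c < y < c' -> forall j, j \in L -> ~ A (fr (j%:R / q%:R + b * y))].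
Proof.
move=> b0; elim: L => [|j L IH] a a' aa'; first by exists a, a'.
have [c [c' [h1 h2 h3 noAj]]] := nowhere_dense_gap_affine (j%:R / q%:R) b0 aa'.
have [e [e' [g1 g2 g3 noAL]]] := IH _ _ h2.
exists e, e'; split; try lra.
move=> y /andP [y1 y2] i; rewrite in_cons => /orP [/eqP ->|iL].
  by apply: noAj; apply/andP; split; lra.
by apply: noAL => //; apply/andP.
Qed.

End Gaps.

Section KeyLemma.
Variable R : realType.

Definition dense01 (tau : nat -> R) : Prop :=
  forall a a', 0 <= a -> a < a' -> a' <= 1 -> exists n, a < tau n < a'.

Lemma dense01_leaves_shifts (A : set R) (b : R) (q : nat) (tau : nat -> R) :
  nowhere_dense A -> b != 0 -> dense01 tau ->
  ~ (forall n, exists2 j, (j < q)%N & A (fr (j%:R / q%:R + b * tau n))).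
Proof.
move=> ndA b0 dense hA.
have [c [c' [c0 cc' c1 noA]]] :=
  nowhere_dense_gap_shifts ndA q (iota 0 q) b0 (ltr01 : (0 : R) < 1).
have [n hn] := dense c c' c0 cc' c1.
have [j jq Aj] := hA n.
by apply: (noA _ hn j); rewrite ?mem_iota.
Qed.

Lemma fr_shift_mod (z : int) (q : nat) (y : R) : (0 < q)%N ->
  exists2 j, (j < q)%N & fr (z%:~R / q%:R + y) = fr (j%:R / q%:R + y).
Proof.
move=> q0; have qR : q%:R != 0 :> R by rewrite pnatr_eq0 -lt0n.
have r0 : 0 <= (z %% q)%Z by rewrite modz_ge0 // -lt0n.
have rq : (z %% q)%Z < q%:Z by rewrite ltz_pmod.
move: r0 rq (divz_eq z q); case: (z %% q)%Z => [j|j] // _ jq zE.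
exists j => //.
have -> : z%:~R / q%:R + y = j%:R / q%:R + y + (z %/ q)%Z%:~R :> R.
  by rewrite {1}zE intrD intrM /=; field.
by rewrite frDz.
Qed.

Lemma no_rational_affine_relation (A : set R) (m : nat) (s x : R) (N : nat -> int)
    (a c : rat) :
  nowhere_dense A -> A `<=` [set x | 0 <= x < 1] -> mmod1 m @` A `<=` A ->
  dense01 (fun n => m%:R ^+ n * s - (N n)%:~R) -> c != 0 ->
  A x -> x = ratr a + ratr c * s -> False.
Proof.
move=> ndA sA TA dense c0 Ax xE.
have da0 := denq_gt0 a; have dc0 := denq_gt0 c.
have [q q0 qE] : exists2 q : nat, (0 < q)%N & (denq a * denq c)%:~R = q%:R :> R.
  exists (absz (denq a * denq c)); first by rewrite absz_gt0 mulf_neq0 ?gt_eqF.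
  by rewrite -[RHS]/(((absz (denq a * denq c))%:Z)%:~R) gez0_abs ?mulr_ge0 ?ltW.
apply: (dense01_leaves_shifts (b := ratr c) (q := q) ndA _ dense) => [|n].
  by rewrite fmorph_eq0.
set z := numq a * denq c * (m%:Z ^+ n) + numq c * denq a * N n.
have mxE : m%:R ^+ n * x = z%:~R / q%:R + ratr c * (m%:R ^+ n * s - (N n)%:~R).
  have da : (denq a)%:~R != 0 :> R by rewrite intr_eq0 gt_eqF.
  have dc : (denq c)%:~R != 0 :> R by rewrite intr_eq0 gt_eqF.
  rewrite xE -qE /ratr /z intrD !intrM rmorphXn /=; field.
  by rewrite da dc.
have [j jq frE] := fr_shift_mod z (ratr c * (m%:R ^+ n * s - (N n)%:~R)) q0.
by exists j => //; rewrite -frE -mxE; exact: orbit_mmod1.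
Qed.

End KeyLemma.

Section Irrationality.
Variable R : realType.

Definition irrational_combinations (A : set R) (t : R) : Prop :=
  (forall x, A x -> (@irrational R) (x - t)) /\
  (forall x, A x -> (@irrational R) (x + t)) /\
  (forall x, A x -> x != 0 -> (@irrational R) (x / t)).

(* x - s, x + s and x / s rational are rational affine relations x = a + c s. *)
Lemma irrational_of_dense01 (A : set R) (m : nat) (s : R) (N : nat -> int) :
  nowhere_dense A -> A `<=` [set x | 0 <= x < 1] -> mmod1 m @` A `<=` A ->
  s != 0 -> dense01 (fun n => m%:R ^+ n * s - (N n)%:~R) ->
  irrational_combinations A s.
Proof.
move=> ndA sA TA s0 dense.
have noRel a c x := @no_rational_affine_relation R A m s x N a c ndA sA TA dense.
split; [|split].
- move=> x Ax [r _ rE]; apply: (noRel r 1 x) => //.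
  by rewrite rmorph1 mul1r rE subrK.
- move=> x Ax [r _ rE]; apply: (noRel r (-1) x) => //.
  by rewrite rmorphN rmorph1 mulN1r rE addrK.
- move=> x Ax x0 [r _ rE]; apply: (noRel 0 r x) => //.
    by apply: contra_neq x0 => r0; move: rE; rewrite r0 rmorph0 => /esym/eqP;
      rewrite mulf_eq0 invr_eq0 (negbTE s0) orbF => /eqP.
  by rewrite rmorph0 add0r rE divfK.
Qed.

End Irrationality.

Section Visits.
Variable R : realType.

Definition visits (m : nat) (tau : nat -> R) : Prop := forall k v, (v < m ^ k)%N ->
  exists n, v%:R / (m%:R ^+ k) <= tau n <= v.+1%:R / (m%:R ^+ k).

(* Visiting implies density: for M = m^(k+1) > 2/(a'-a) and f = floor (a M),
   the m-adic interval [(f+1)/M, (f+2)/M] lies inside (a, a'). *)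
Lemma visits_dense01 (m : nat) (tau : nat -> R) : (1 < m)%N -> visits m tau ->
  dense01 tau.
Proof.
move=> m1 vis a a' a0 aa' a1.
have ha : 0 < a' - a by lra.
have [k /andP [_ hk]] := floor_nat (ltW (divr_gt0 (ltr0Sn R 1) ha)).
set M : R := m%:R ^+ k.+1.
have Mk : k.+1%:R < M by rewrite /M -natrX ltr_nat ltn_expl.
have M0 : 0 < M by apply: lt_trans Mk; rewrite ltr0n.
have hk' : 2 < (a' - a) * k.+1%:R by move: hk; rewrite ltr_pdivrMr // mulrC.
have [f /andP [f1 f2]] := floor_nat (mulr_ge0 a0 (ltW M0)).
have fM : (f.+1 < m ^ k.+1)%N.
  by rewrite -(ltr_nat R) natrX -/M; rewrite -!natr1 in f2 *; nra.
have [n /andP [t1 t2]] := vis k.+1 f.+1 fM.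
exists n; move: t1 t2; rewrite -/M ler_pdivrMr // ler_pdivlMr // => t1 t2.
by rewrite -!natr1 in f2 t1 t2; apply/andP; split; nra.
Qed.

End Visits.

Section Words.
Local Open Scope nat_scope.

Fixpoint word_value (m : nat) (w : seq nat) : nat :=
  if w is a :: w' then a * m ^ size w' + word_value m w' else 0.

Fixpoint digits (m k v : nat) : seq nat :=
  if k is k'.+1 then v %/ m ^ k' :: digits m k' (v %% m ^ k') else [::].

Lemma size_digits m k v : size (digits m k v) = k.
Proof. by elim: k v => //= k IH v; rewrite IH. Qed.

Lemma digitsK m k v : 0 < m -> v < m ^ k ->
  all (fun x => x < m) (digits m k v) /\ word_value m (digits m k v) = v.
Proof.
move=> m0; elim: k v => [|k IH] v /=; first by rewrite expn0 ltnS leqn0 => /eqP ->.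
move=> vk; have mk : 0 < m ^ k by rewrite expn_gt0 m0.
have [digs_lt digsK] := IH (v %% m ^ k) (ltn_pmod _ mk).
rewrite digs_lt digsK size_digits -divn_eq andbT; split=> //.
by rewrite ltn_divLR // -expnS.
Qed.

Fixpoint prefix_value (m : nat) (d : nat -> nat) (n : nat) : nat :=
  if n is n'.+1 then m * prefix_value m d n' + d n' else 0.

Lemma prefix_value_bounds m d : (forall k, d k < m) -> forall n j,
  m ^ j * prefix_value m d n <= prefix_value m d (n + j) <
  m ^ j * (prefix_value m d n).+1.
Proof.
move=> dm n; elim=> [|j IH]; first by rewrite addn0 expn0 !mul1n leqnn ltnSn.
rewrite addnS /= expnS; move: IH (dm (n + j)).
set P := m ^ j; set a := prefix_value m d n; set b := prefix_value m d (n + j).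
by move=> /andP [h1 h2] h3; apply/andP; split; nia.
Qed.

End Words.

Section UniversalExpansion.
Variable R : realType.
Variables (m : nat) (d : nat -> nat) (s : R).
Hypothesis m1 : (1 < m)%N.

Let m0 : (0 < m)%N. Proof. exact: ltnW. Qed.
Let mR : m%:R != 0 :> R. Proof. by rewrite pnatr_eq0 -lt0n. Qed.

Lemma partial_sumE n :
  \sum_(0 <= k < n) (d k)%:R / (m%:R ^+ k.+1) = (prefix_value m d n)%:R / (m%:R ^+ n) :> R.
Proof.
elim: n => [|n IH]; first by rewrite big_geq // mul0r.
rewrite big_nat_recr //= IH natrD natrM exprS.
have mn : m%:R ^+ n != 0 :> R by rewrite expf_neq0.
by field; apply/andP.
Qed.

Definition tail n : R := m%:R ^+ n * s - (prefix_value m d n)%:R.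

Lemma tail_rec n : tail n.+1 = m%:R * tail n - (d n)%:R.
Proof. rewrite /tail /= natrD natrM exprS; ring. Qed.

(* Since s is the limit of the partial sums, which after the n-th all lie in
   [P/m^n, (P+1)/m^n] with P the n-digit prefix, the tails lie in [0, 1]. *)
Lemma tail_itv : madic_expansion m d s -> forall n, 0 <= tail n <= 1.
Proof.
move=> [dm sums_cvg] n.
have Mn : 0 < m%:R ^+ n :> R by rewrite exprn_gt0 // ltr0n.
set P := prefix_value m d n.
have : [set` `[P%:R / m%:R ^+ n, P.+1%:R / m%:R ^+ n]] s.
  apply: (closed_cvg _ (@itv_closed _ R _ _) _ _ sums_cvg).
  exists n => // i /= ni.
  rewrite partial_sumE in_itv /=.
  have := prefix_value_bounds dm n (i - n); rewrite subnKC // => /andP [lo hi].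
  have -> : m%:R ^+ i = m%:R ^+ n * m%:R ^+ (i - n) :> R by rewrite -exprD subnKC.
  have Mj : 0 < m%:R ^+ (i - n) :> R by rewrite exprn_gt0 // ltr0n.
  rewrite ler_pdivlMr ?ler_pdivrMr ?mulr_gt0 // !mulrA !divfK ?gt_eqF //.
  by rewrite -!natrX -!natrM !ler_nat mulnC lo mulnC ltnW.
rewrite /= in_itv /= ler_pdivrMr // ler_pdivlMr // => /andP [h1 h2].
by rewrite -natr1 in h2; rewrite /tail; apply/andP; split; rewrite mulrC; lra.
Qed.

Lemma tail_word w n : (forall i, (i < size w)%N -> d (n + i)%N = nth 0%N w i) ->
  tail n = (word_value m w)%:R / m%:R ^+ size w + tail (n + size w) / m%:R ^+ size w.
Proof.
elim: w n => [|a w IH] n dw /=; first by rewrite addn0 expr0 !divr1 add0r.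
have da : d n = a by have := dw 0%N isT; rewrite addn0.
have := IH n.+1 (fun i hi => etrans (f_equal d (addSnnS n i)) (dw i.+1 hi)).
rewrite tail_rec da => IHw.
have Mk : m%:R ^+ size w != 0 :> R by rewrite expf_neq0.
have -> : tail n = ((m%:R * tail n - a%:R) + a%:R) / m%:R by field.
rewrite addnS -addSn natrD natrM exprS IHw natrX; field; apply/andP; split => //.
Qed.

(* Universality: the tails visit every m-adic interval, namely right after an
   occurrence of the digits of v. *)
Lemma universal_visits : madic_expansion m d s -> universal_seq m d -> visits m tail.
Proof.
move=> expn univ k v vk.
have [digs_lt digsK] := digitsK m0 vk.
have [k0 dk0] := univ _ digs_lt.
exists k0; rewrite (tail_word dk0) size_digits digsK.
have /andP [t0 t1] := tail_itv expn (k0 + k).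
have M0 : 0 < m%:R ^+ k :> R by rewrite exprn_gt0 // ltr0n.
have h1 : 0 <= tail (k0 + k) / m%:R ^+ k by rewrite divr_ge0 // ltW.
have h2 : tail (k0 + k) / m%:R ^+ k <= 1 / m%:R ^+ k by rewrite ler_pM2r // invr_gt0.
have -> : v.+1%:R / m%:R ^+ k = v%:R / m%:R ^+ k + 1 / m%:R ^+ k :> R.
  by rewrite -natr1 mulrDl.
apply/andP; split; lra.
Qed.

End UniversalExpansion.

Fixpoint avoiding_words (K v J : nat) : seq nat :=
  if J is J'.+1 then
    [seq (a * K ^ J' + u)%N | a <- iota 0 v ++ iota v.+1 (K - v.+1),
                              u <- avoiding_words K v J']
  else [:: 0%N].

Lemma size_avoiding_words K v J : (v < K)%N ->
  size (avoiding_words K v J) = ((K - 1) ^ J)%N.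
Proof.
move=> vK; elim: J => [|J IH] //=.
by rewrite size_allpairs size_cat !size_iota IH expnS; congr (_ * _)%N; lia.
Qed.

Section DigitAvoidance.
Variable R : realType.

(* The (i+1)-th base-K digit of t in [0, 1). *)
Definition digit (K : nat) (t : R) (i : nat) : int :=
  Num.floor (K%:R * fr (K%:R ^+ i * t)).

Lemma avoiding_cover (K v : nat) : (v < K)%N -> forall J (t : R), 0 <= t < 1 ->
  (forall i, (i < J)%N -> digit K t i != v%:Z) ->
  exists2 u, u \in avoiding_words K v J & u%:R <= t * K%:R ^+ J < u.+1%:R.
Proof.
move=> vK; elim=> [|J IH] t /andP [t0 t1] tJ.
  by exists 0%N; rewrite ?mem_seq1 // expr0 mulr1 -natr1 add0r; apply/andP.
have K0 : 0 < K%:R :> R by rewrite ltr0n; apply: leq_ltn_trans vK.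
have [a /andP [a1 a2]] := floor_nat (mulr_ge0 (ltW K0) t0 : 0 <= K%:R * t).
have aK : (a < K)%N.
  by rewrite -(ltr_nat R); apply: le_lt_trans a1 _; rewrite -[X in _ < X]mulr1 ltr_pM2l.
have first_digit : Num.floor (K%:R * t) = a%:Z.
  by apply: floor_def; rewrite intrD natr1 a1 a2.
have av : a != v.
  by have := tJ 0%N isT; rewrite /digit expr0 mul1r fr_id ?t0 // first_digit;
    apply: contra => /eqP ->.
set t' := fr (K%:R * t).
have t'E : t' = K%:R * t - a%:R by rewrite /t' /fr first_digit.
have t'J : forall i, (i < J)%N -> digit K t' i != v%:Z.
  move=> i iJ; rewrite /digit /t' -natrX frMn natrX mulrA -exprSr.
  exact: tJ i.+1 iJ.
have [u' u'_in /andP [u1 u2]] := IH t' (introT andP (conj (fr_ge0 _) (fr_lt1 _))) t'J.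
exists (a * K ^ J + u')%N.
  apply: allpairs_f => //; rewrite mem_cat !mem_iota /=.
  have [va|av'] : (a < v)%N \/ (v < a)%N by move: av => /eqP; lia.
    by rewrite va.
  by rewrite subnKC // av' aK orbT.
rewrite natrD natrM natrX exprS mulrA -[t * _](mulrC) t'E in u1 u2 *.
rewrite -natr1 mulrBl in u1 u2; rewrite -natr1 natrD natrM natrX.
by apply/andP; split; lra.
Qed.

Definition grid_itv (M : R) (u : nat) : set R := [set` `[u%:R / M, u.+1%:R / M]].

Definition grid_cover (M : R) (s : seq nat) : set R :=
  \big[setU/set0]_(u <- s) grid_itv M u.

Lemma grid_cover_measurable M s : measurable (grid_cover M s).
Proof. by apply: bigsetU_measurable => u _; exact: measurable_itv. Qed.

Lemma grid_cover_mem M s u x : u \in s -> grid_itv M u x -> grid_cover M s x.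
Proof.
elim: s => [|a s IH] //; rewrite /grid_cover big_cons in_cons => /orP [/eqP <-|us] hx.
  by left.
by right; apply: IH.
Qed.

Lemma grid_cover_measure M s : 0 < M ->
  (lebesgue_measure (grid_cover M s) <= ((size s)%:R / M)%:E)%E.
Proof.
move=> M0; elim: s => [|a s IH]; first by rewrite /grid_cover big_nil measure0 mul0r.
rewrite /grid_cover big_cons.
apply: le_trans (measureU2 _ _ _) _; [exact: measurable_itv|exact: grid_cover_measurable|].
have itvE : lebesgue_measure (grid_itv M a) = M^-1%:E.
  rewrite /grid_itv lebesgue_measure_itv /= lte_fin ltr_pM2r ?invr_gt0 // ltr_nat ltnSn.
  by rewrite -EFinB -natr1 mulrDl addrAC subrr add0r mul1r.
by rewrite /= -natr1 mulrDl mul1r EFinD addeC; apply: leeD => //; rewrite itvE.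
Qed.

(* Lebesgue-almost no t in [0, 1) avoids the digit v in base K: the avoiding
   set is covered, for every J, by (K-1)^J intervals of length K^-J. *)
Lemma digit_avoiding_negligible (K v : nat) : (v < K)%N ->
  (@lebesgue_measure R).-negligible
    [set t : R | 0 <= t < 1 /\ forall i, digit K t i != v%:Z].
Proof.
move=> vK; have KR : 0 < K%:R :> R by rewrite ltr0n; apply: leq_ltn_trans vK.
set N := \bigcap_J grid_cover (K%:R ^+ J) (avoiding_words K v J).
have mN : measurable N.
  by apply: bigcapT_measurable => J; exact: grid_cover_measurable.
exists N; split => //.
- set r : R := (K - 1)%:R / K%:R.
  have bound J : (lebesgue_measure N <= (r ^+ J)%:E)%E.
    have MJ : 0 < K%:R ^+ J :> R by rewrite exprn_gt0.
    have -> : r ^+ J = (size (avoiding_words K v J))%:R / K%:R ^+ J.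
      by rewrite size_avoiding_words // natrX /r exprMn exprVn.
    have N_sub : (lebesgue_measure N <=
        lebesgue_measure (grid_cover (K%:R ^+ J) (avoiding_words K v J)))%E.
      by apply: le_measure; rewrite ?inE //; [exact: grid_cover_measurable|move=> t; apply].
    exact: le_trans N_sub (grid_cover_measure _ MJ).
  have r_lt1 : `|r| < 1.
    rewrite ger0_norm; last by rewrite /r divr_ge0 // ler0n.
    by rewrite /r ltr_pdivrMr // mul1r ltr_nat; lia.
  apply/eqP; rewrite eq_le measure_ge0 andbT; apply/lee_addgt0Pr => e e0.
  have [J _ rJ] := cvgr0_norm_lt _ (cvg_expr r_lt1) e e0.
  rewrite add0e; apply: le_trans (bound J) _; rewrite lee_fin.
  exact: le_trans (ler_norm _) (ltW (rJ J (leqnn J))).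
- move=> t [t01 avoid] J _.
  have [u u_in /andP [u1 u2]] := avoiding_cover (J := J) vK t01 (fun i _ => avoid i).
  apply: (grid_cover_mem u_in); rewrite /grid_itv /= in_itv /=.
  have MJ : 0 < K%:R ^+ J :> R by rewrite exprn_gt0.
  by rewrite ler_pdivrMr // ler_pdivlMr // u1 ltW.
Qed.

End DigitAvoidance.

Section AlmostEvery.
Variable R : realType.

(* If every base-m^k digit value occurs among the base-m^k digits of t, for every k,
   then fr (m^n t) visits every m-adic interval: the base-m^k digit i of t equal
   to v means fr (m^(k i) t) lies in [v/m^k, (v+1)/m^k). *)
Lemma digits_occur_visits (m : nat) (t : R) : (1 < m)%N ->
  (forall k v, (v < m ^ k)%N -> exists i, digit (m ^ k) t i = v%:Z) ->
  visits m (fun n => m%:R ^+ n * t - (Num.floor (m%:R ^+ n * t))%:~R).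
Proof.
move=> m1 occur k v vk.
have [i digit_i] := occur k v vk.
exists (k * i)%N; rewrite exprM -natrX -/(fr _).
move: digit_i; rewrite /digit; set y := fr _ => digit_i.
have M0 : 0 < (m ^ k)%N%:R :> R by rewrite ltr0n expn_gt0 ltnW.
have := floor_itv ((m ^ k)%N%:R * y); rewrite digit_i intrD /= => /andP [h1 h2].
rewrite natrX in M0 h1 h2 *.
rewrite ler_pdivrMr // ler_pdivlMr // -natr1; apply/andP; split; rewrite mulrC; lra.
Qed.

Lemma almost_all_digits_occur (m : nat) :
  (@lebesgue_measure R).-negligible [set t : R | 0 <= t < 1 /\
    exists k v, (v < m ^ k)%N /\ forall i, digit (m ^ k) t i != v%:Z].
Proof.
pose B k v := [set t : R | (v < m ^ k)%N /\ 0 <= t < 1 /\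
  forall i, digit (m ^ k) t i != v%:Z].
have B_negligible k v : (@lebesgue_measure R).-negligible (B k v).
  case: (ltnP v (m ^ k)) => vk.
    by apply: negligibleS (digit_avoiding_negligible R vk) => t [_ []].
  by apply: negligibleS (negligible_set0 _) => t [vk' _]; move: vk; rewrite leqNgt vk'.
apply: negligibleS (negligible_bigcup (fun k => negligible_bigcup (B_negligible k))).
by move=> t [t01 [k [v [vk avoid]]]]; exists k => //; exists v.
Qed.

End AlmostEvery.

Unset Implicit Arguments.
Theorem theorem1 (R : realType) (m : nat) (A : set R) :
  (2 <= m)%N ->
  A `<=` [set x | 0 <= x < 1] ->
  nowhere_dense A ->
  mmod1 m @` A `<=` A ->
  (forall t : R, 0 < t < 1 -> has_universal_expansion m t ->
     (forall x, A x -> (@irrational R) (x - t)) /\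
     (forall x, A x -> (@irrational R) (x + t)) /\
     (forall x, A x -> x != 0 -> (@irrational R) (x / t))) /\
  (forall t : R, 1 < t -> has_universal_expansion m t^-1 ->
     forall x, A x -> x != 0 -> (@irrational R) (t * x)) /\
  (@lebesgue_measure R).-negligible
     [set t : R | 0 < t < 1 /\
        ~ ((forall x, A x -> (@irrational R) (x - t)) /\
           (forall x, A x -> (@irrational R) (x + t)) /\
           (forall x, A x -> x != 0 -> (@irrational R) (x / t)))].
Proof.
move=> m1 sA ndA TA.
have irr_of_visits s (N : nat -> int) : s != 0 ->
    visits m (fun n => m%:R ^+ n * s - (N n)%:~R) -> irrational_combinations A s.
  by move=> s0 vis; exact: irrational_of_dense01 ndA sA TA s0 (visits_dense01 m1 vis).
have universal_irr s : s != 0 -> has_universal_expansion m s ->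
    irrational_combinations A s.
  move=> s0 [d [expn univ]].
  exact: (irr_of_visits s (fun n => (prefix_value m d n)%:Z) s0 (universal_visits m1 expn univ)).
split; [|split].
- by move=> t /andP [t0 _]; apply: universal_irr; rewrite gt_eqF.
- move=> t t1 univ x Ax x0.
  have t0 : t^-1 != 0 by rewrite invr_eq0 gt_eqF // (lt_trans ltr01 t1).
  have [_ [_ irr_quot]] := universal_irr _ t0 univ.
  by rewrite -[t]invrK mulrC; exact: irr_quot.
- apply: negligibleS (almost_all_digits_occur R m) => t [/andP [t0 t1] not_irr].
  split; first by rewrite ltW.
  apply: contrapT => no_avoid; apply: not_irr.
  apply: (irr_of_visits t (fun n => Num.floor (m%:R ^+ n * t)) (lt0r_neq0 t0)).
  apply: digits_occur_visits m1 _ => k v vk.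
  apply: contrapT => no_i; apply: no_avoid; exists k, v; split => // i.
  by apply/eqP => digit_i; apply: no_i; exists i.
Qed.
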